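(* Let $\mathcal{K}$ be a class of groups closed under homomorphic images. For every group $G$ and every normal subgroup $N$ of $G$, the quotient group $G/N$ is conjugacy $\mathcal{K}$-separable if and only if every coset of $G$ modulo $N$ is conjugacy $\mathcal{K}$-separable in $G$.
   Context: A group $G$ is conjugacy $\mathcal{K}$-separable if whenever $a,b\in G$ are not conjugate in $G$, there is a homomorphism $\varphi$ of $G$ onto a group $X\in\mathcal{K}$ such that $a\varphi$ and $b\varphi$ are not conjugate in $X$. A subset $M\subseteq G$ is called conjugacy $\mathcal{K}$-separable in $G$ if whenever $a\in G$ is not conjugate in $G$ to any element of $M$, there is a homomorphism $\varphi$ of $G$ onto a group $X\in\mathcal{K}$ such that $a\varphi$ is not conjugate in $X$ to any element of $M\varphi$. *)

From Stdlib Require Import ClassicalEpsilon FunctionalExtensionality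
  PropExtensionality ProofIrrelevance.

Set Implicit Arguments.

Record group : Type := Group {
  gcar :> Type;
  gmul : gcar -> gcar -> gcar;
  ginv : gcar -> gcar;
  gone : gcar;
  gmulA : forall x y z, gmul x (gmul y z) = gmul (gmul x y) z;
  gmul1l : forall x, gmul gone x = x;
  gmul1r : forall x, gmul x gone = x;
  gmulVl : forall x, gmul (ginv x) x = gone;
  gmulVr : forall x, gmul x (ginv x) = gone }.
Arguments gmul {g} _ _.
Arguments ginv {g} _.
Arguments gone {g}.

Section Theory.
Variable G : group.
Implicit Types x y a b : G.

Lemma inv_unique x y : gmul x y = gone -> ginv x = y.
Proof.
intro H. rewrite <- (gmul1r _ (ginv x)), <- H, gmulA, gmulVl, gmul1l. reflexivity.
Qed.

Lemma invK x : ginv (ginv x) = x.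
Proof. apply inv_unique, gmulVl. Qed.

Lemma invM x y : ginv (gmul x y) = gmul (ginv y) (ginv x).
Proof.
apply inv_unique. rewrite <- gmulA, (gmulA _ y), gmulVr, gmul1l, gmulVr.
reflexivity.
Qed.

Lemma mulKr x y : gmul x (gmul (ginv x) y) = y.
Proof. rewrite gmulA, gmulVr, gmul1l. reflexivity. Qed.

Lemma mulVKr x y : gmul (ginv x) (gmul x y) = y.
Proof. rewrite gmulA, gmulVl, gmul1l. reflexivity. Qed.

Definition conjugate a b : Prop := exists x, gmul (gmul (ginv x) a) x = b.

End Theory.

Arguments conjugate {G} a b.

Ltac gsimpl := repeat (rewrite ?invM, ?invK, <- ?gmulA, ?mulKr, ?mulVKr,
  ?gmulVl, ?gmulVr, ?gmul1l, ?gmul1r).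

Definition is_hom {G H : group} (f : G -> H) : Prop :=
  forall x y, f (gmul x y) = gmul (f x) (f y).

Definition surjective {A B : Type} (f : A -> B) : Prop :=
  forall b, exists a, f a = b.

Definition group_class := group -> Prop.

Definition closed_under_hom_images (K : group_class) : Prop :=
  forall (X Y : group) (f : X -> Y), K X -> is_hom f -> surjective f -> K Y.

Definition conj_separable (K : group_class) (G : group) : Prop :=
  forall a b : G, ~ conjugate a b ->
    exists (X : group) (phi : G -> X),
      K X /\ is_hom phi /\ surjective phi /\ ~ conjugate (phi a) (phi b).

Definition conj_separable_in (K : group_class) {G : group} (M : G -> Prop) : Prop :=
  forall a : G, ~ (exists m, M m /\ conjugate a m) ->
    exists (X : group) (phi : G -> X),
      K X /\ is_hom phi /\ surjective phi /\
      ~ (exists m, M m /\ conjugate (phi a) (phi m)).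

Record normal_subgroup {G : group} (N : G -> Prop) : Prop := {
  ns1 : N gone;
  nsM : forall x y, N x -> N y -> N (gmul x y);
  nsV : forall x, N x -> N (ginv x);
  nsJ : forall x g, N x -> N (gmul (gmul (ginv g) x) g) }.

Definition lcoset {G : group} (N : G -> Prop) (g : G) : G -> Prop :=
  fun x => N (gmul (ginv g) x).

Lemma sig_ext (A : Type) (P : A -> Prop) (S T : A) (p : P S) (q : P T) :
  S = T -> exist P S p = exist P T q.
Proof. intros ->. f_equal. apply proof_irrelevance. Qed.

Section Quotient.
Variables (G : group) (N : G -> Prop) (HN : normal_subgroup N).

Lemma mid (a b x : G) :
  gmul (ginv a) x = gmul (gmul (ginv a) b) (gmul (ginv b) x).
Proof. gsimpl. reflexivity. Qed.

Lemma lcoset_eq (a b : G) : lcoset N a = lcoset N b <-> N (gmul (ginv a) b).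
Proof.
split.
- intro H. change (lcoset N a b). rewrite H. unfold lcoset. rewrite gmulVl.
  apply (ns1 HN).
- intro n. apply functional_extensionality; intro x.
  apply propositional_extensionality; unfold lcoset; split; intro Hx.
  + rewrite (mid b a x). apply (nsM HN); [|exact Hx].
    replace (gmul (ginv b) a) with (ginv (gmul (ginv a) b)) by (gsimpl; reflexivity).
    apply (nsV HN), n.
  + rewrite (mid a b x). apply (nsM HN); assumption.
Qed.

Definition qcar : Type := { S : G -> Prop | exists g, S = lcoset N g }.

Definition qclass (g : G) : qcar := exist _ (lcoset N g) (ex_intro _ g eq_refl).

Definition qrep (S : qcar) : G :=
  proj1_sig (constructive_indefinite_description _ (proj2_sig S)).

Lemma qclass_rep S : qclass (qrep S) = S.
Proof.
destruct S as [S HS]. unfold qclass, qrep; simpl.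
destruct (constructive_indefinite_description _ HS) as [g Hg]; simpl.
subst S. apply sig_ext. reflexivity.
Qed.

Lemma qclass_surj S : exists a, S = qclass a.
Proof. exists (qrep S). symmetry. apply qclass_rep. Qed.

Lemma qclass_eq (a b : G) : N (gmul (ginv a) b) -> qclass a = qclass b.
Proof. intro H. apply sig_ext. apply lcoset_eq. exact H. Qed.

Lemma qrep_spec (a : G) : N (gmul (ginv a) (qrep (qclass a))).
Proof.
assert (E := f_equal (@proj1_sig _ _) (qclass_rep (qclass a))).
change (lcoset N (qrep (qclass a)) = lcoset N a) in E.
apply lcoset_eq. symmetry. exact E.
Qed.

Definition qmul (S T : qcar) : qcar := qclass (gmul (qrep S) (qrep T)).
Definition qinv (S : qcar) : qcar := qclass (ginv (qrep S)).
Definition qone : qcar := qclass gone.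

Lemma qmul_class (a b : G) : qmul (qclass a) (qclass b) = qclass (gmul a b).
Proof.
unfold qmul. symmetry. apply qclass_eq.
assert (Ha := qrep_spec a). assert (Hb := qrep_spec b).
set (a' := qrep (qclass a)) in *. set (b' := qrep (qclass b)) in *.
replace (gmul (ginv (gmul a b)) (gmul a' b'))
  with (gmul (gmul (gmul (ginv b) (gmul (ginv a) a')) b) (gmul (ginv b) b'))
  by (gsimpl; reflexivity).
apply (nsM HN); [apply (nsJ HN), Ha | exact Hb].
Qed.

Lemma qinv_class (a : G) : qinv (qclass a) = qclass (ginv a).
Proof.
unfold qinv. apply qclass_eq.
assert (Ha := qrep_spec a). set (a' := qrep (qclass a)) in *.
replace (gmul (ginv (ginv a')) (ginv a))
  with (gmul (gmul (ginv (ginv a)) (gmul (ginv a) a')) (ginv a))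
  by (gsimpl; reflexivity).
apply (nsJ HN), Ha.
Qed.

Lemma qmulA (S T U : qcar) : qmul S (qmul T U) = qmul (qmul S T) U.
Proof.
destruct (qclass_surj S) as [a ->]; destruct (qclass_surj T) as [b ->];
destruct (qclass_surj U) as [c ->].
rewrite !qmul_class, gmulA. reflexivity.
Qed.

Lemma qmul1l (S : qcar) : qmul qone S = S.
Proof. destruct (qclass_surj S) as [a ->]. unfold qone. rewrite qmul_class, gmul1l. reflexivity. Qed.

Lemma qmul1r (S : qcar) : qmul S qone = S.
Proof. destruct (qclass_surj S) as [a ->]. unfold qone. rewrite qmul_class, gmul1r. reflexivity. Qed.

Lemma qmulVl (S : qcar) : qmul (qinv S) S = qone.
Proof. destruct (qclass_surj S) as [a ->]. rewrite qinv_class, qmul_class, gmulVl. reflexivity. Qed.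

Lemma qmulVr (S : qcar) : qmul S (qinv S) = qone.
Proof. destruct (qclass_surj S) as [a ->]. rewrite qinv_class, qmul_class, gmulVr. reflexivity. Qed.

Definition quotient_group : group :=
  @Group qcar qmul qinv qone qmulA qmul1l qmul1r qmulVl qmulVr.

End Quotient.

Arguments quotient_group {G N} HN.

(* Two cosets aN and bN are conjugate in G/N exactly when a is conjugate in G
   to some element of the coset bN.  Hence a map separating aN from bN in G/N,
   composed with G -> G/N, separates a from bN in G.  Conversely, a surjection
   f : G -> X with X in K separating a from bN induces a surjection
   G/N -> X/f(N), whose target lies in K as a quotient of X, and the same
   criterion in X/f(N) shows that it separates aN from bN. *)

Set Implicit Arguments.

Lemma hom_one (G H : group) (f : G -> H) : is_hom f -> f gone = gone.
Proof.
intro Hf.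
assert (Eidem : gmul (f gone) (f gone) = f gone) by (rewrite <- Hf, gmul1l; reflexivity).
rewrite <- (mulVKr _ (f gone) (f gone)) at 1. rewrite Eidem, gmulVl. reflexivity.
Qed.

Lemma hom_inv (G H : group) (f : G -> H) (x : G) : is_hom f -> f (ginv x) = ginv (f x).
Proof.
intro Hf. symmetry. apply inv_unique. rewrite <- Hf, gmulVr. apply hom_one, Hf.
Qed.

Lemma is_hom_comp (G H L : group) (f : G -> H) (g : H -> L) :
  is_hom f -> is_hom g -> is_hom (fun x => g (f x)).
Proof. intros Hf Hg x y. rewrite Hf, Hg. reflexivity. Qed.

Lemma surjective_comp (A B C : Type) (f : A -> B) (g : B -> C) :
  surjective f -> surjective g -> surjective (fun x => g (f x)).
Proof.
intros Sf Sg z. destruct (Sg z) as [y <-]. destruct (Sf y) as [x <-]. exists x. reflexivity.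
Qed.

Lemma conjugate_hom (G H : group) (f : G -> H) (a b : G) :
  is_hom f -> conjugate a b -> conjugate (f a) (f b).
Proof. intros Hf [x <-]. exists (f x). rewrite !Hf, hom_inv by exact Hf. reflexivity. Qed.

Section QuotientProjection.
Variables (G : group) (N : G -> Prop) (HN : normal_subgroup N).

Lemma normal_mulV_sym (u v : G) : N (gmul (ginv u) v) -> N (gmul (ginv v) u).
Proof.
intro Huv.
replace (gmul (ginv v) u) with (ginv (gmul (ginv u) v)) by (gsimpl; reflexivity).
apply (nsV HN), Huv.
Qed.

Lemma qclass_eqP (a b : G) : qclass G N a = qclass G N b <-> N (gmul (ginv a) b).
Proof.
split.
- intro E. apply (proj1 (lcoset_eq HN a b)), (f_equal (@proj1_sig _ _) E).
- apply (qclass_eq HN).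
Qed.

Lemma qclass_hom : is_hom (qclass G N : G -> quotient_group HN).
Proof. intros x y. symmetry. apply (qmul_class HN). Qed.

Lemma qclass_surjective : surjective (qclass G N : G -> quotient_group HN).
Proof. intro S. destruct (qclass_surj S) as [a ->]. exists a. reflexivity. Qed.

Lemma conjugate_qclassP (a b : G) :
  @conjugate (quotient_group HN) (qclass G N a) (qclass G N b) <->
  exists m, lcoset N b m /\ conjugate a m.
Proof.
split.
- intros [Z HZ]. destruct (qclass_surj Z) as [x ->].
  exists (gmul (gmul (ginv x) a) x). split; [|exists x; reflexivity].
  apply qclass_eqP. rewrite <- HZ. simpl.
  rewrite qinv_class, !qmul_class by exact HN. reflexivity.
- intros [m [Hm Cam]]. apply (proj2 (qclass_eqP b m)) in Hm. rewrite Hm.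
  apply (conjugate_hom qclass_hom Cam).
Qed.

End QuotientProjection.

Arguments qclass_surjective {G N} HN.

Section InducedHom.
Variables (G X : group) (N : G -> Prop) (M : X -> Prop)
  (HN : normal_subgroup N) (HM : normal_subgroup M)
  (f : G -> X) (Hf : is_hom f) (HfNM : forall n, N n -> M (f n)).

Definition quotient_map (S : quotient_group HN) : quotient_group HM :=
  qclass X M (f (qrep S)).

Lemma quotient_map_class (c : G) : quotient_map (qclass G N c) = qclass X M (f c).
Proof.
apply (qclass_eq HM). rewrite <- hom_inv, <- Hf by exact Hf.
apply HfNM, (normal_mulV_sym HN), (qrep_spec HN).
Qed.

Lemma quotient_map_hom : is_hom quotient_map.
Proof.
intros S T. destruct (qclass_surj S) as [x ->]. destruct (qclass_surj T) as [y ->].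
simpl. rewrite (qmul_class HN), !quotient_map_class, (qmul_class HM), Hf.
reflexivity.
Qed.

Lemma quotient_map_surjective : surjective f -> surjective quotient_map.
Proof.
intros Sf Z. destruct (qclass_surj Z) as [y ->]. destruct (Sf y) as [x <-].
exists (qclass G N x). apply quotient_map_class.
Qed.

End InducedHom.

Section ImageSubgroup.
Variables (G X : group) (N : G -> Prop) (HN : normal_subgroup N)
  (f : G -> X) (Hf : is_hom f).

Definition image (y : X) : Prop := exists n, N n /\ f n = y.

Lemma image_normal : surjective f -> normal_subgroup image.
Proof.
intro Sf. split.
- exists gone. split; [apply (ns1 HN) | apply hom_one, Hf].
- intros x y [n [Hn <-]] [m [Hm <-]].
  exists (gmul n m). split; [apply (nsM HN); assumption | apply Hf].
- intros x [n [Hn <-]].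
  exists (ginv n). split; [apply (nsV HN), Hn | apply hom_inv, Hf].
- intros x g [n [Hn <-]]. destruct (Sf g) as [h <-].
  exists (gmul (gmul (ginv h) n) h). split; [apply (nsJ HN), Hn |].
  rewrite !Hf, hom_inv by exact Hf. reflexivity.
Qed.

Lemma lcoset_image (b : G) (y : X) :
  lcoset image (f b) y -> exists m, lcoset N b m /\ f m = y.
Proof.
intros [n [Hn Efn]]. exists (gmul b n). split.
- unfold lcoset. rewrite mulVKr. exact Hn.
- rewrite Hf, Efn. apply mulKr.
Qed.

End ImageSubgroup.

Arguments image {G X} N f y.

Section Separability.
Variables (K : group_class) (G : group) (N : G -> Prop) (HN : normal_subgroup N).

Lemma lcoset_conj_separable_in :
  conj_separable K (quotient_group HN) -> forall g : G, conj_separable_in K (lcoset N g).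
Proof.
intros Hsep g a Ha.
destruct (Hsep (qclass G N a) (qclass G N g)) as [X [psi [KX [Hpsi [Spsi Hnc]]]]].
{ intro C. apply Ha, (proj1 (conjugate_qclassP HN a g) C). }
exists X, (fun x => psi (qclass G N x)). split; [exact KX |]. split; [|split].
- apply is_hom_comp; [apply qclass_hom | exact Hpsi].
- apply surjective_comp; [apply qclass_surjective | exact Spsi].
- intros [m [Hm C]]. apply Hnc. apply (proj2 (qclass_eqP HN g m)) in Hm.
  rewrite Hm. exact C.
Qed.

Lemma quotient_conj_separable :
  closed_under_hom_images K ->
  (forall g : G, conj_separable_in K (lcoset N g)) -> conj_separable K (quotient_group HN).
Proof.
intros HK Hsep S T Hnc.
destruct (qclass_surj S) as [a ->]. destruct (qclass_surj T) as [b ->].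
destruct (Hsep b a) as [X [f [KX [Hf [Sf Hnb]]]]].
{ intro C. apply Hnc, (proj2 (conjugate_qclassP HN a b) C). }
pose proof (image_normal HN Hf Sf) as HM.
assert (HfNM : forall n, N n -> image N f (f n)) by (intros n Hn; exists n; split; auto).
exists (quotient_group HM), (quotient_map HM f).
split; [|split; [|split]].
- exact (HK X _ _ KX (qclass_hom HM) (qclass_surjective HM)).
- apply (quotient_map_hom HM Hf HfNM).
- apply (quotient_map_surjective HN Hf HfNM Sf).
- rewrite !(quotient_map_class HN HM Hf HfNM).
  intro C. apply (proj1 (conjugate_qclassP HM (f a) (f b))) in C.
  destruct C as [y [Hy Cy]]. destruct (lcoset_image Hf _ Hy) as [m [Hm <-]].
  apply Hnb. exists m. split; assumption.
Qed.

End Separability.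

Theorem proposition1 (K : group_class) (HK : closed_under_hom_images K)
  (G : group) (N : G -> Prop) (HN : normal_subgroup N) :
  conj_separable K (quotient_group HN) <->
  (forall g : G, conj_separable_in K (lcoset N g)).
Proof.
split.
- apply lcoset_conj_separable_in.
- apply (quotient_conj_separable HK).
Qed.
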